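(* Every total strongly polynomial-time computable functional $F\colon\mathcal B\to\mathcal B$ is polynomial-time computable.
   Context: $\Sigma=\{0,1\}$, $\mathcal B=(\Sigma^* )^{\Sigma^*}$ is the set of total string functions. An oracle Turing machine $M^?$ with oracle $\varphi$ replaces, upon entering its query state, the query-tape content $\mathbf b$ by $\varphi(\mathbf b)$ in one time step; $\operatorname{time}_{M^\varphi}(\mathbf a)\in\mathbb N\cup\{\infty\}$ is its number of steps on input $\mathbf a$. $M^?$ computes $F$ if $M^\varphi=F(\varphi)$ for all $\varphi\in\mathcal B$. Size function: $|\varphi|(n)=\max\{|\varphi(\mathbf a)|:|\mathbf a|\le n\}$. Second-order polynomials: smallest class of functions $\mathbb N^{\mathbb N}\times\mathbb N\to\mathbb N$ containing $(l,n)\mapsto p(n)$ for polynomials $p$ with natural coefficients, closed under pointwise sum, product and $P\mapsto P^+$, $P^+(l,n)=l(P(l,n))$. $F$ is polynomial-time computable if computed by a machine with $\operatorname{time}_{M^\varphi}(\mathbf a)\le P(|\varphi|,|\mathbf a|)$ for all $\varphi,\mathbf a$ for some second-order polynomial $P$. Length revision function: for oracle $\varphi$ and input $\mathbf a$, let $\mathbf b_k$ be the content of the oracle answer tape at step $k$; $o_{\varphi,\mathbf a}(0)=|\mathbf a|$, $o_{\varphi,\mathbf a}(n+1)=\max\{o_{\varphi,\mathbf a}(n),|\mathbf b_{n+1}|\}$. A function $t\colon\mathbb N\to\mathbb N$ is a step-count for $M^?$ if for all $\varphi\in\mathcal B$, $\mathbf a\in\Sigma^*$ and all $n\le\operatorname{time}_{M^\varphi}(\mathbf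 a)$: $n\le t(o_{\varphi,\mathbf a}(n))$. $M^?$ has finite length-revision if there is $N\in\mathbb N$ with $\#o_{\varphi,\mathbf a}(\mathbb N)\le N$ for all $\varphi\in\mathcal B$, $\mathbf a\in\Sigma^*$ (where $o_{\varphi,\mathbf a}(\mathbb N)$ is the image of $o_{\varphi,\mathbf a}$). $F$ is strongly polynomial-time computable if it is computed by an oracle machine having finite length-revision and a polynomial step-count. *)

From mathcomp Require Import all_boot.
Set Implicit Arguments. Unset Strict Implicit. Unset Printing Implicit Defensive.

Definition string := seq bool.
Definition Bspace := string -> string.

Inductive move := MoveL | MoveS | MoveR.

Definition move_head (m : move) (h : nat) : nat :=
  match m with MoveL => h.-1 | MoveS => h | MoveR => h.+1 end.

(* An oracle Turing machine with:
   - a read-only input tape (holding the input string),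
   - a read-only oracle answer tape (written only by the oracle),
   - k.+2 read/write tapes over a finite alphabet Gam: tape 0 is the oracle
     query tape, tape 1 is the output tape, tapes 2..k+1 are work tapes.
   Read-only tapes show [Some b] on a bit and [None] (blank) elsewhere.
   The transition function acts in the ordinary states; in the query state
   the oracle step is performed, in the halting state the machine stops. *)
Record OTM : Type := {
  Gam : finType;
  blank : Gam;
  sym : bool -> Gam;
  sym_inj : sym true != sym false;
  blank_sym : forall b, blank != sym b;
  ntapes : nat;
  St : finType;
  q_start : St;
  q_halt : St;
  q_query : St;
  q_answer : St;
  delta : St -> option bool -> option bool -> ('I_ntapes.+2 -> Gam) ->
          St * ('I_ntapes.+2 -> Gam) * ('I_ntapes.+2 -> move) * move * move
}.

Record config (M : OTM) : Type := Config {
  c_state : St M;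
  c_in : string;
  c_in_head : nat;
  c_ans : string;
  c_ans_head : nat;
  c_tapes : 'I_(ntapes M).+2 -> seq (Gam M) * nat
}.

Section Machine.
Variable M : OTM.

Definition read_ro (s : string) (h : nat) : option bool :=
  if h < size s then Some (nth false s h) else None.

Fixpoint rw_content (s : seq (Gam M)) : string :=
  match s with
  | [::] => [::]
  | g :: s' => match [pick b | g == sym M b] with
               | Some b => b :: rw_content s'
               | None => [::]
               end
  end.

Definition query_tape : 'I_(ntapes M).+2 := ord0.
Definition output_tape : 'I_(ntapes M).+2 := lift ord0 ord0.

Definition init (a : string) : config M :=
  Config (q_start M) a 0 [::] 0 (fun _ => ([::], 0)).

Definition halted (c : config M) : bool := c_state c == q_halt M.

Definition step (phi : Bspace) (c : config M) : config M :=
  if c_state c == q_halt M then c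
  else if c_state c == q_query M then
    Config (q_answer M) (c_in c) (c_in_head c)
           (phi (rw_content (c_tapes c query_tape).1)) 0
           (fun i => if i == query_tape then ([::], 0) else c_tapes c i)
  else
    let: (q', w, mv, mi, ma) :=
       delta (c_state c) (read_ro (c_in c) (c_in_head c)) (read_ro (c_ans c) (c_ans_head c))
             (fun i => nth (blank M) (c_tapes c i).1 (c_tapes c i).2) in
    Config q' (c_in c) (move_head mi (c_in_head c)) (c_ans c) (move_head ma (c_ans_head c))
           (fun i => (set_nth (blank M) (c_tapes c i).1 (c_tapes c i).2 (w i),
                      move_head (mv i) (c_tapes c i).2)).

Definition run (phi : Bspace) (a : string) (n : nat) : config M :=
  iter n (step phi) (init a).

Definition le_time (phi : Bspace) (a : string) (n : nat) : Prop :=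
  forall m, m < n -> ~~ halted (run phi a m).

Definition time_le (phi : Bspace) (a : string) (T : nat) : Prop :=
  exists2 m, m <= T & halted (run phi a m).

Definition outputs (phi : Bspace) (a y : string) : Prop :=
  exists n, halted (run phi a n) /\ rw_content (c_tapes (run phi a n) output_tape).1 = y.

Definition computes (F : Bspace -> Bspace) : Prop :=
  forall phi a, outputs phi a (F phi a).

Fixpoint lrev (phi : Bspace) (a : string) (n : nat) : nat :=
  match n with
  | 0 => size a
  | n'.+1 => maxn (lrev phi a n') (size (c_ans (run phi a n'.+1)))
  end.

Definition step_count (t : nat -> nat) : Prop :=
  forall phi a n, le_time phi a n -> n <= t (lrev phi a n).

Definition image_card_le (f : nat -> nat) (N : nat) : Prop :=
  forall s : seq nat, uniq s -> (forall x, x \in s -> exists n, f n = x) -> size s <= N.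

Definition finite_length_revision : Prop :=
  exists N, forall phi a, image_card_le (lrev phi a) N.
End Machine.

Definition peval (cs : seq nat) (n : nat) : nat :=
  \sum_(i < size cs) nth 0 cs i * n ^ i.

Inductive sopoly :=
  | SPpoly of seq nat
  | SPadd of sopoly & sopoly
  | SPmul of sopoly & sopoly
  | SPapp of sopoly.

Fixpoint speval (P : sopoly) (l : nat -> nat) (n : nat) : nat :=
  match P with
  | SPpoly cs => peval cs n
  | SPadd P Q => speval P l n + speval Q l n
  | SPmul P Q => speval P l n * speval Q l n
  | SPapp P => l (speval P l n)
  end.

Definition sizefun (phi : Bspace) (n : nat) : nat :=
  \max_(i < n.+1) \max_(w : i.-tuple bool) size (phi w).

Definition poly_time_computable (F : Bspace -> Bspace) : Prop :=
  exists M : OTM, computes M F /\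
    exists P : sopoly, forall phi a, time_le M phi a (speval P (sizefun phi) (size a)).

Definition strongly_poly_time_computable (F : Bspace -> Bspace) : Prop :=
  exists M : OTM, computes M F /\ finite_length_revision M /\
    exists cs : seq nat, step_count M (peval cs).

(** Let t be a polynomial step-count of M and N a bound on the number of values
    of the length revision function o.  As long as o is at most B, the run has
    taken at most t(B) steps, so every query written so far has length at most
    t(B) and every answer has length at most |phi|(t(B)).  Hence after its k-th
    strict increase o is bounded by the second-order polynomial B_k, where
    B_0 = n and B_(k+1) = B_k + |phi|(t(B_k)).  As o increases fewer than N
    times, it never exceeds B_N and the machine halts within t(B_N) steps. *)

From mathcomp Require Import all_boot.

Set Implicit Arguments. Unset Strict Implicit. Unset Printing Implicit Defensive.

Lemma peval_nil n : peval [::] n = 0.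
Proof. by rewrite /peval big_ord0. Qed.

Lemma peval_cons c cs n : peval (c :: cs) n = c + n * peval cs n.
Proof.
rewrite /peval /= big_ord_recl /= expn0 muln1; congr (_ + _).
by rewrite big_distrr /=; apply: eq_bigr => i _; rewrite expnS mulnCA.
Qed.

Lemma peval_homo cs : {homo peval cs : m n / m <= n}.
Proof.
move=> m n le_mn; elim: cs => [|c cs IHcs]; first by rewrite !peval_nil.
by rewrite !peval_cons leq_add2l leq_mul.
Qed.

Fixpoint spcomp (cs : seq nat) (P : sopoly) : sopoly :=
  match cs with
  | [::] => SPpoly [::]
  | c :: cs' => SPadd (SPpoly [:: c]) (SPmul P (spcomp cs' P))
  end.

Lemma speval_spcomp cs P l n : speval (spcomp cs P) l n = peval cs (speval P l n).
Proof.
elim: cs => [|c cs IHcs] /=; first by rewrite !peval_nil.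
by rewrite IHcs !peval_cons peval_nil muln0 addn0.
Qed.

Fixpoint revision_bound (cs : seq nat) (k : nat) : sopoly :=
  match k with
  | 0 => SPpoly [:: 0; 1]
  | k'.+1 => SPadd (revision_bound cs k') (SPapp (spcomp cs (revision_bound cs k')))
  end.

Lemma speval_revision_bound0 cs l n : speval (revision_bound cs 0) l n = n.
Proof. by rewrite /= !peval_cons peval_nil muln0 addn0 muln1. Qed.

Lemma speval_revision_boundS cs l n k :
  speval (revision_bound cs k.+1) l n =
  speval (revision_bound cs k) l n + l (peval cs (speval (revision_bound cs k) l n)).
Proof. by rewrite /= speval_spcomp. Qed.

Lemma revision_bound_homo cs l n :
  {homo (fun k => speval (revision_bound cs k) l n) : i j / i <= j}.
Proof.
by apply: homo_leq => [//|y x z|k]; [exact: leq_trans | rewrite /= leq_addr].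
Qed.

Lemma size_le_sizefun phi q m : size q <= m -> size (phi q) <= sizefun phi m.
Proof.
rewrite -ltnS => lt_qm; apply: leq_trans (leq_bigmax (Ordinal lt_qm)).
exact: (leq_bigmax (in_tuple q)).
Qed.

Section Run.
Variables (M : OTM) (phi : Bspace) (a : string).

Notation run := (run M phi a).
Notation lrev := (lrev M phi a).

Lemma size_rw_content (s : seq (Gam M)) : size (rw_content s) <= size s.
Proof. by elim: s => [|g s IHs] //=; case: pickP. Qed.

Lemma move_head_leS m h : move_head m h <= h.+1.
Proof. by case: m => /=; rewrite ?leqnSn // (leq_trans (leq_pred h)). Qed.

Lemma tape_run_le n i : size (c_tapes (run n) i).1 <= n /\ (c_tapes (run n) i).2 <= n.
Proof.
elim: n => [//|n [size_le head_le]].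
rewrite /run iterS -/(run n) /step.
case: ifP => _; first by split; apply: leq_trans (leqnSn n).
case: ifP => _; first by rewrite /=; case: (i == _) => //; split; apply: leq_trans (leqnSn n).
case: (delta _ _ _ _) => [[[[q w] mv] mi] ma] /=; split; last exact: leq_trans (move_head_leS _ _) _.
by rewrite size_set_nth geq_max ltnS head_le (leq_trans size_le).
Qed.

Lemma ans_run_step n :
  c_ans (run n.+1) = c_ans (run n) \/
  exists2 q, size q <= n & c_ans (run n.+1) = phi q.
Proof.
rewrite /run iterS -/(run n) /step.
case: ifP => _; first by left.
case: ifP => _; last by case: (delta _ _ _ _) => [[[[q w] mv] mi] ma]; left.
right; eexists; last by [].
exact: leq_trans (size_rw_content _) (tape_run_le n (query_tape M)).1.
Qed.

Lemma size_ans_le_lrev n : size (c_ans (run n)) <= lrev n.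
Proof. by case: n => [|n] //=; rewrite leq_maxr. Qed.

Lemma lrevS n : lrev n.+1 = maxn (lrev n) (size (c_ans (run n.+1))).
Proof. by []. Qed.

Fixpoint revisions (n : nat) : seq nat :=
  if n is n'.+1 then
    if lrev n' < lrev n then lrev n :: revisions n' else revisions n'
  else [:: lrev 0].

Lemma revisionsS n :
  revisions n.+1 = if lrev n < lrev n.+1 then lrev n.+1 :: revisions n else revisions n.
Proof. by []. Qed.

Lemma mem_revisions_le n x : x \in revisions n -> x <= lrev n.
Proof.
elim: n => [|n IHn] /=; first by rewrite inE => /eqP ->.
case: ifP => [lt_n | _] /=; last by move/IHn/leq_trans; apply; exact: leq_maxl.
by rewrite inE => /predU1P [-> // | /IHn /leq_trans]; apply; exact: ltnW.
Qed.

Lemma uniq_revisions n : uniq (revisions n).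
Proof.
elim: n => [//|n IHn] /=; case: ifP => [lt_n|_] //=.
by rewrite IHn andbT; apply/negP => /mem_revisions_le; rewrite leqNgt lt_n.
Qed.

Lemma mem_revisions_lrev n x : x \in revisions n -> exists k, lrev k = x.
Proof.
elim: n => [|n IHn] /=; first by rewrite inE => /eqP ->; exists 0.
by case: ifP => _ //; rewrite inE => /predU1P [->|/IHn //]; exists n.+1.
Qed.

Lemma size_revisions_le N : image_card_le lrev N -> forall n, size (revisions n) <= N.
Proof. by move=> card_le n; apply: card_le (@mem_revisions_lrev n); exact: uniq_revisions. Qed.

Variable cs : seq nat.
Hypothesis step_count_cs : step_count M (peval cs).

Notation bound k := (speval (revision_bound cs k) (sizefun phi) (size a)).

Lemma lrev_le_revision_bound n :
  le_time M phi a n -> lrev n <= bound (size (revisions n)).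
Proof.
elim: n => [|n IHn] running.
  by rewrite -[lrev 0](speval_revision_bound0 cs (sizefun phi)) revision_bound_homo.
have running_n : le_time M phi a n by move=> m lt_mn; apply/running/ltnW.
have {}IHn := IHn running_n.
rewrite revisionsS; case: ifPn => [lt_n | ]; last by rewrite -leqNgt => /leq_trans; apply.
have lrev_ans : lrev n.+1 = size (c_ans (run n.+1)).
  by move: lt_n; rewrite lrevS /maxn; case: ifP; rewrite // ltnn.
have [ans_eq | [q size_q ans_eq]] := ans_run_step n.
  by move: lt_n; rewrite lrevS ans_eq (maxn_idPl (size_ans_le_lrev n)) ltnn.
rewrite lrev_ans ans_eq [size (_ :: _)]/= speval_revision_boundS (leq_trans _ (leq_addl _ _)) //.
apply/size_le_sizefun/(leq_trans size_q)/(leq_trans (step_count_cs running_n)).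
exact: peval_homo.
Qed.

Lemma time_le_step_count L :
  (forall n, le_time M phi a n -> lrev n <= L) -> time_le M phi a (peval cs L).
Proof.
move=> lrev_le; set T := peval cs L.
have [/existsP [m halted_m] | not_halted] := boolP [exists m : 'I_T.+1, halted (run m)].
  by exists m; first by rewrite -ltnS.
have running : le_time M phi a T.+1.
  by move=> m lt_mT; apply: contra not_halted => halted_m; apply/existsP; exists (Ordinal lt_mT).
by have := step_count_cs running; rewrite ltnNge peval_homo // lrev_le.
Qed.

End Run.

Theorem mainTheorem10 (F : Bspace -> Bspace) :
  strongly_poly_time_computable F -> poly_time_computable F.
Proof.
move=> [M [computes_F [[N finite_rev] [cs step_count_cs]]]].
exists M; split => //; exists (spcomp cs (revision_bound cs N)) => phi a.
rewrite speval_spcomp; apply: time_le_step_count => // n running.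
apply: leq_trans (lrev_le_revision_bound step_count_cs running) _.
exact/revision_bound_homo/size_revisions_le.
Qed.
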